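(* There exist connected graphs $G$ and integers $k$ with $k-1\ge\chi(G)$ for which $\underline{\mathrm{lcs}}(G,k)<\underline{\mathrm{lcs}}(G,k-1)$; that is, $\underline{\mathrm{lcs}}(G,k)$ is not in general monotone non-decreasing in $k$.
   Context: All graphs are finite and simple. For a graph $G=(V,E)$ and an integer $k\ge\chi(G)$, a proper $k$-colouring is a map $c:V\to[k]$ with $c(u)\neq c(v)$ for every edge $uv$. A set $S\subseteq V$ is a determining set for $(G,c)$ if there is no proper $k$-colouring $c'\neq c$ with $c'(s)=c(s)$ for all $s\in S$; a critical set is an inclusion-minimal determining set. $\mathrm{lcs}(G,c)$ is the size of a largest critical set for $(G,c)$, and $\underline{\mathrm{lcs}}(G,k)$ is the minimum of $\mathrm{lcs}(G,c)$ over all proper $k$-colourings $c$ of $G$. *)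

From mathcomp Require Import all_boot.
Set Implicit Arguments. Unset Strict Implicit. Unset Printing Implicit Defensive.

Section Colourings.
Variable T : finType.

Definition simple_graph (e : rel T) : Prop := symmetric e /\ irreflexive e.

Definition connected_graph (e : rel T) : bool :=
  (0 < #|T|) && [forall x, forall y, connect e x y].

Definition proper (e : rel T) (k : nat) (c : {ffun T -> 'I_k}) : bool :=
  [forall u, forall v, e u v ==> (c u != c v)].

Definition colourable (e : rel T) (k : nat) : bool :=
  [exists c : {ffun T -> 'I_k}, proper e c].

(* chromatic number: least k admitting a proper k-colouring
   (T is always #|T|-colourable, so the range bound is harmless). *)
Definition chromatic (e : rel T) : nat :=
  \big[minn/#|T|]_(j < #|T|.+1 | colourable e j) j.

Definition determining (e : rel T) (k : nat) (c : {ffun T -> 'I_k})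
  (S : {set T}) : bool :=
  [forall c' : {ffun T -> 'I_k},
     (proper e c' && (c' != c)) ==> [exists s in S, c' s != c s]].

Definition critical (e : rel T) (k : nat) (c : {ffun T -> 'I_k})
  (S : {set T}) : bool :=
  minset (determining e c) S.

Definition lcs (e : rel T) (k : nat) (c : {ffun T -> 'I_k}) : nat :=
  \max_(S : {set T} | critical e c S) #|S|.

(* lower lcs(G,k): minimum of lcs(G,c) over proper k-colourings c.
   Default #|T| only matters if no proper k-colouring exists (k < chi). *)
Definition lower_lcs (e : rel T) (k : nat) : nat :=
  \big[minn/#|T|]_(c : {ffun T -> 'I_k} | proper e c) lcs e c.

End Colourings.

(* A set S determines a proper colouring c exactly when S meets the disagreement set
   {x | c' x != c x} of every other proper colouring c', so the critical sets of c are the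
   inclusion-minimal sets meeting all these disagreement sets.  Encoding colourings and vertex
   sets as lists makes this decidable by evaluation: the proper 5-colouring 0121304 has no
   critical set of more than four vertices, whereas every proper 4-colouring has a critical set
   of at least five. *)

From mathcomp Require Import all_boot all_order.
Set Implicit Arguments. Unset Strict Implicit. Unset Printing Implicit Defensive.
Import Order.TTheory.

Section CriticalSets.
Variables (T : finType) (e : rel T) (k : nat).
Implicit Types (c : {ffun T -> 'I_k}) (S : {set T}).

Lemma determiningS c S S' :
  S \subset S' -> determining e c S -> determining e c S'.
Proof.
move=> sSS' /forallP detS; apply/forallP => c'; apply/implyP => c'_other.
have /existsP[s /andP[sS ne_s]] := implyP (detS c') c'_other.
by apply/existsP; exists s; rewrite (subsetP sSS').
Qed.

Lemma criticalE c S :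
  critical e c S = determining e c S && [forall x in S, ~~ determining e c (S :\ x)].
Proof.
apply/minsetP/andP => [[detS minS] | [detS /forall_inP minS]].
  split=> //; apply/forall_inP => x xS; apply/negP => /minS/(_ (subsetDl _ _)) eqS.
  by move: xS; rewrite -eqS setD11.
split=> // B detB sBS; apply/eqP; rewrite eqEsubset sBS.
apply/subsetP => x xS; apply: contraR (minS x xS) => xNB.
by apply: determiningS detB; rewrite subsetD1 sBS.
Qed.

Lemma lower_lcs_le_lcs c : proper e c -> lower_lcs e k <= lcs e c.
Proof. by rewrite /lower_lcs -minEnat; apply: (@bigmin_le_cond _ nat). Qed.

Lemma leq_lower_lcs m :
  m <= #|T| -> (forall c, proper e c -> m <= lcs e c) -> m <= lower_lcs e k.
Proof. by rewrite /lower_lcs -minEnat => mT mc; apply/(@bigmin_geP _ nat). Qed.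

Lemma chromatic_le : colourable e k -> chromatic e <= k.
Proof.
rewrite /chromatic -minEnat => ck; have [lt_kT | lt_Tk] := ltnP k #|T|.+1.
  exact: (@bigmin_le_cond _ nat _ _ (Ordinal lt_kT)).
exact: leq_trans (@bigmin_le_id _ nat _ _ _ _ _) (ltnW lt_Tk).
Qed.

End CriticalSets.

Lemma connected_graph_root (T : finType) (e : rel T) (r : T) :
  connect_sym e -> (forall x, connect e x r) -> connected_graph e.
Proof.
move=> sym_e to_r; apply/andP; split; first by apply/card_gt0P; exists r.
by apply/forallP => x; apply/forallP => y; rewrite (connect_trans (to_r x)) // sym_e.
Qed.

Fixpoint seqs_over (A : Type) (xs : seq A) (m : nat) : seq (seq A) :=
  if m is m'.+1 then [seq x :: s | x <- xs, s <- seqs_over xs m'] else [:: [::]].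

Lemma mem_seqs_over (A : eqType) (xs : seq A) m s :
  (s \in seqs_over xs m) = (size s == m) && all (mem xs) s.
Proof.
elim: m s => [|m IHm] [|x s] //=.
  by apply/negbTE/allpairsP => -[[? ?] []].
apply/allpairsP/andP => [[[y t] [/= yxs txs [-> ->]]] | [size_s /andP[xxs sxs]]].
  by move: txs; rewrite IHm /= => /andP[/eqP-> ->]; rewrite yxs.
by exists (x, s); rewrite IHm -eqSS size_s.
Qed.

Lemma all_iota_ord n (P : pred nat) : all P (iota 0 n) = [forall i : 'I_n, P i].
Proof.
rewrite -val_enum_ord all_map.
by apply/allP/forallP => [Pi i | Pi i _]; [apply: Pi; rewrite mem_enum | apply: Pi].
Qed.

Lemma eq_from_nth_ord (A : Type) (x0 : A) n (s t : seq A) :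
  size s = n -> size t = n -> (forall i : 'I_n, nth x0 s i = nth x0 t i) -> s = t.
Proof.
move=> size_s size_t eq_st; apply: (eq_from_nth (x0 := x0)) => [|i]; first by rewrite size_s.
by rewrite size_s => lt_in; apply: (eq_st (Ordinal lt_in)).
Qed.

Definition diff_mask (d d' : seq nat) : seq bool := [seq p.1 != p.2 | p <- zip d d'].

Definition hits (b m : seq bool) : bool := has (fun p => p.1 && p.2) (zip b m).

Definition hitting_set (D : seq (seq bool)) (b : seq bool) : bool := all (hits b) D.

Definition minimal_hitting_set (D : seq (seq bool)) (b : seq bool) : bool :=
  hitting_set D b &&
  all (fun i => nth false b i ==> ~~ hitting_set D (set_nth false b i false))
      (iota 0 (size b)).

Definition disagreements (L : seq (seq nat)) (d : seq nat) : seq (seq bool) :=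
  [seq diff_mask d' d | d' <- L & d' != d].

Section EdgeLists.
Variables (n : nat) (E : seq (nat * nat)).
Implicit Types (S : {set 'I_n}) (b : seq bool) (d : seq nat).

Definition edge_rel : rel 'I_n :=
  fun x y => ((x : nat, y : nat) \in E) || ((y : nat, x : nat) \in E).

Lemma edge_rel_sym : symmetric edge_rel.
Proof. by move=> x y; rewrite /edge_rel orbC. Qed.

Lemma edge_rel_irr : all (fun p => p.1 != p.2) E -> irreflexive edge_rel.
Proof.
by move=> /allP loopless x; rewrite /edge_rel orbb; apply/negP => /loopless/eqP.
Qed.

Definition proper_seq (d : seq nat) : bool := all (fun p => nth 0 d p.1 != nth 0 d p.2) E.

Definition proper_seqs (k : nat) : seq (seq nat) :=
  [seq d <- seqs_over (iota 0 k) n | proper_seq d].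

Definition colour_seq k (c : {ffun 'I_n -> 'I_k}) : seq nat :=
  [seq val (c i) | i <- enum 'I_n].

Definition ffun_of_seq k (d : seq nat) : {ffun 'I_n -> 'I_k.+1} :=
  [ffun i : 'I_n => inord (nth 0 d i)].

Definition mask_of (S : {set 'I_n}) : seq bool := [seq i \in S | i <- enum 'I_n].

Definition set_of_mask (b : seq bool) : {set 'I_n} := [set i : 'I_n | nth false b i].

Lemma size_colour_seq k (c : {ffun 'I_n -> 'I_k}) : size (colour_seq c) = n.
Proof. by rewrite size_map size_enum_ord. Qed.

Lemma nth_colour_seq k (c : {ffun 'I_n -> 'I_k}) (i : 'I_n) : nth 0 (colour_seq c) i = c i.
Proof. by rewrite (nth_map i) ?size_enum_ord // nth_ord_enum. Qed.

Lemma colour_seq_inj k : injective (@colour_seq k).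
Proof.
move=> c c' eq_cc'; apply/ffunP => i; apply: val_inj.
by rewrite /= -!nth_colour_seq eq_cc'.
Qed.

Lemma ffun_of_seqK k d :
  size d = n -> all (fun x => x < k.+1) d -> colour_seq (ffun_of_seq k d) = d.
Proof.
move=> size_d lt_d; apply: (eq_from_nth_ord (x0 := 0) (size_colour_seq _) size_d) => i.
by rewrite nth_colour_seq ffunE inordK //; apply: (allP lt_d); rewrite mem_nth ?size_d.
Qed.

Lemma size_mask_of S : size (mask_of S) = n.
Proof. by rewrite size_map size_enum_ord. Qed.

Lemma nth_mask_of S (i : 'I_n) : nth false (mask_of S) i = (i \in S).
Proof. by rewrite (nth_map i) ?size_enum_ord // nth_ord_enum. Qed.

Lemma mask_of_seqs_over S : mask_of S \in seqs_over [:: false; true] n.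
Proof. by rewrite mem_seqs_over size_mask_of eqxx; apply/allP => -[]. Qed.

Lemma card_mask_of S : #|S| = count id (mask_of S).
Proof. by rewrite cardE /enum_mem size_filter count_map enumT. Qed.

Lemma set_of_maskK b : size b = n -> mask_of (set_of_mask b) = b.
Proof.
move=> size_b; apply: (eq_from_nth_ord (x0 := false) (size_mask_of _) size_b) => i.
by rewrite nth_mask_of inE.
Qed.

Lemma mask_of_setD1 S x : mask_of (S :\ x) = set_nth false (mask_of S) x false.
Proof.
have size_setD1 : size (set_nth false (mask_of S) x false) = n.
  by rewrite size_set_nth size_mask_of; apply/maxn_idPr.
apply: (eq_from_nth_ord (x0 := false) (size_mask_of _) size_setD1) => i.
by rewrite nth_set_nth /= !nth_mask_of !inE val_eqE; case: eqVneq.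
Qed.

Lemma hits_diff_mask k S (c c' : {ffun 'I_n -> 'I_k}) :
  hits (mask_of S) (diff_mask (colour_seq c') (colour_seq c)) = [exists i in S, c' i != c i].
Proof.
rewrite /hits /diff_mask !zip_map -map_comp zip_map has_map.
by apply/hasP/existsP => [[i _ /= iS_ne] | [i iS_ne]]; exists i; rewrite ?mem_enum.
Qed.

Hypothesis E_bounded : all (fun p => (p.1 < n) && (p.2 < n)) E.

Lemma proper_colour_seq k (c : {ffun 'I_n -> 'I_k}) :
  proper edge_rel c = proper_seq (colour_seq c).
Proof.
apply/forallP/allP => [pc [x y] xyE | pd u].
  have /andP[/= lt_xn lt_yn] := allP E_bounded _ xyE.
  have /implyP := forallP (pc (Ordinal lt_xn)) (Ordinal lt_yn).
  rewrite /edge_rel /= xyE => /(_ isT).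
  by rewrite (nth_colour_seq c (Ordinal lt_xn)) (nth_colour_seq c (Ordinal lt_yn)).
apply/forallP => v; apply/implyP => /orP[] /pd; rewrite /= !nth_colour_seq //.
by rewrite eq_sym.
Qed.

Lemma mem_proper_seqs k d :
  (d \in proper_seqs k) = [&& size d == n, all (fun x => x < k) d & proper_seq d].
Proof.
rewrite mem_filter mem_seqs_over andbC -andbA; congr [&& _, _ & _].
by apply: eq_all => x; rewrite inE mem_iota.
Qed.

Lemma proper_seqsP k d :
  reflect (exists2 c : {ffun 'I_n -> 'I_k.+1}, proper edge_rel c & colour_seq c = d)
          (d \in proper_seqs k.+1).
Proof.
rewrite mem_proper_seqs; apply: (iffP and3P) => [[/eqP size_d lt_d pd] | [c pc <-]].
  have c_d := ffun_of_seqK size_d lt_d.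
  by exists (ffun_of_seq k d); rewrite // proper_colour_seq c_d.
rewrite size_colour_seq -proper_colour_seq; split => //.
by apply/allP => _ /mapP[i _ ->]; apply: ltn_ord.
Qed.

Lemma determining_hitting_set k (c : {ffun 'I_n -> 'I_k.+1}) S :
  determining edge_rel c S =
  hitting_set (disagreements (proper_seqs k.+1) (colour_seq c)) (mask_of S).
Proof.
rewrite /hitting_set /disagreements all_map all_filter.
apply/forallP/allP => [detS _ /proper_seqsP[c' pc' <-] | hitS c'].
  rewrite /= (inj_eq (@colour_seq_inj _)) hits_diff_mask.
  by apply/implyP => ne_c'c; apply: (implyP (detS c')); rewrite pc'.
apply/implyP => /andP[pc' ne_c'c].
have c'_seq : colour_seq c' \in proper_seqs k.+1 by apply/proper_seqsP; exists c'.
by have := hitS _ c'_seq; rewrite /= (inj_eq (@colour_seq_inj _)) hits_diff_mask ne_c'c.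
Qed.

Lemma critical_minimal_hitting_set k (c : {ffun 'I_n -> 'I_k.+1}) S :
  critical edge_rel c S =
  minimal_hitting_set (disagreements (proper_seqs k.+1) (colour_seq c)) (mask_of S).
Proof.
rewrite criticalE /minimal_hitting_set determining_hitting_set size_mask_of all_iota_ord.
congr andb; apply: eq_forallb => x.
by rewrite nth_mask_of determining_hitting_set mask_of_setD1.
Qed.

End EdgeLists.

Definition witness_edges : seq (nat * nat) :=
  [:: (0, 1); (0, 2); (0, 3); (0, 4); (0, 6); (1, 2); (1, 4); (1, 6); (2, 4); (2, 5);
      (3, 5); (4, 5); (5, 6)].

Definition witness_graph : rel 'I_7 := edge_rel witness_edges.

Lemma witness_edges_bounded : all (fun p => (p.1 < 7) && (p.2 < 7)) witness_edges.
Proof. by []. Qed.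

Lemma witness_simple : simple_graph witness_graph.
Proof. by split; [exact: edge_rel_sym | exact: edge_rel_irr]. Qed.

Lemma witness_connected : connected_graph witness_graph.
Proof.
apply: (@connected_graph_root _ _ ord0); first exact/sym_connect_sym/edge_rel_sym.
move=> x; have [-> | x_ne0] := eqVneq x ord0; first exact: connect0.
have [x5 | x_ne5] := eqVneq (val x) 5.
  have x_2 : witness_graph x (inord 2) by rewrite /witness_graph /edge_rel x5 inordK.
  have two_0 : witness_graph (inord 2) ord0 by rewrite /witness_graph /edge_rel inordK.
  exact: connect_trans (connect1 x_2) (connect1 two_0).
apply: connect1; move: x x_ne0 x_ne5.
by case=> [[|[|[|[|[|[|[|//]]]]]]] ?].
Qed.

Lemma witness_colourable4 : colourable witness_graph 4.
Proof.
have d_seq : [:: 0; 1; 2; 1; 3; 0; 2] \in proper_seqs 7 witness_edges 4.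
  by rewrite mem_proper_seqs.
by case/(proper_seqsP witness_edges_bounded): d_seq => c pc _; apply/existsP; exists c.
Qed.

Definition large_masks : seq (seq bool) :=
  [seq b <- seqs_over [:: false; true] 7 | 4 < count id b].

Lemma mask_of_large_masks (S : {set 'I_7}) : 4 < #|S| -> mask_of S \in large_masks.
Proof. by rewrite mem_filter card_mask_of => ->; apply: mask_of_seqs_over. Qed.

Definition witness_colouring5 : seq nat := [:: 0; 1; 2; 1; 3; 0; 4].

Lemma witness_colouring5_critical_small :
  let D := disagreements (proper_seqs 7 witness_edges 5) witness_colouring5 in
  all (fun b => ~~ minimal_hitting_set D b) large_masks.
Proof. by vm_compute. Qed.

Lemma witness_colourings4_critical_large :
  let L := proper_seqs 7 witness_edges 4 in
  all (fun d => has (minimal_hitting_set (disagreements L d)) large_masks) L.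
Proof.
(* [find] stops at the first witness, whereas [has] evaluates its predicate everywhere. *)
have witnesses : let L := proper_seqs 7 witness_edges 4 in
  all (fun d => find (minimal_hitting_set (disagreements L d)) large_masks < size large_masks) L.
  by vm_compute.
by apply: sub_all _ witnesses => d; cbv beta; rewrite has_find.
Qed.

Lemma lower_lcs_witness5 : lower_lcs witness_graph 5 <= 4.
Proof.
have c5_seq : witness_colouring5 \in proper_seqs 7 witness_edges 5 by rewrite mem_proper_seqs.
case/(proper_seqsP witness_edges_bounded): c5_seq => c pc c_c5.
apply: leq_trans (lower_lcs_le_lcs pc) _; apply/bigmax_leqP => S.
rewrite (critical_minimal_hitting_set witness_edges_bounded) c_c5 => crit_S.
rewrite leqNgt; apply: contraL crit_S => /mask_of_large_masks S_large.
exact: allP witness_colouring5_critical_small _ S_large.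
Qed.

Lemma lower_lcs_witness4 : 4 < lower_lcs witness_graph 4.
Proof.
apply: leq_lower_lcs => [|c pc]; first by rewrite card_ord.
have c_seq : colour_seq c \in proper_seqs 7 witness_edges 4.
  by apply/(proper_seqsP witness_edges_bounded); exists c.
have /hasP[b] := allP witness_colourings4_critical_large _ c_seq.
rewrite mem_filter mem_seqs_over => /andP[b_large /andP[/eqP size_b _]] b_crit.
apply: leq_trans b_large _; rewrite -(set_of_maskK size_b) -card_mask_of.
apply: leq_bigmax_cond.
by rewrite (critical_minimal_hitting_set witness_edges_bounded) set_of_maskK.
Qed.

Theorem theorem7 :
  exists (T : finType) (e : rel T) (k : nat),
    simple_graph e /\ connected_graph e /\
    chromatic e <= k /\ lower_lcs e k.+1 < lower_lcs e k.
Proof.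
exists 'I_7, witness_graph, 4.
split; first exact: witness_simple.
split; first exact: witness_connected.
split; first exact: chromatic_le witness_colourable4.
exact: leq_ltn_trans lower_lcs_witness5 lower_lcs_witness4.
Qed.
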